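(* Let $f:\mathbb{R}^n\times\mathbb{R}^p\to[-\infty,\infty]$ be a proper nearly convex function and let $\mathcal{P}_2(x,y)=y$. Suppose $0\in\operatorname{ri}\big(\mathcal{P}_2(\operatorname{dom} f)\big)$. Then $\mathcal{V}=\mathcal{V}_d$, where $\mathcal{V}=\inf\{f(x,0):x\in\mathbb{R}^n\}$ and $\mathcal{V}_d=\sup\{-f^*(0,y^* ):y^*\in\mathbb{R}^p\}$.
   Context: A set $\Omega$ is nearly convex if there is a convex set $C$ with $C\subset\Omega\subset\overline{C}$; $\operatorname{ri}\Omega=\{a\in\Omega:\exists\delta>0,\ B(a;\delta)\cap\operatorname{aff}\Omega\subset\Omega\}$. A function is nearly convex if its epigraph is nearly convex, proper if its domain $\{f<\infty\}$ is nonempty and $f>-\infty$. Fenchel conjugate $f^*(u,v)=\sup_{(x,y)}\{\langle u,x\rangle+\langle v,y\rangle-f(x,y)\}$. *)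

From HB Require Import structures.
From mathcomp Require Import all_boot all_order all_algebra.
From mathcomp Require Import all_classical all_reals all_analysis.
Set Implicit Arguments. Unset Strict Implicit. Unset Printing Implicit Defensive.
Import Order.TTheory GRing.Theory Num.Theory.
Import numFieldNormedType.Exports.
Local Open Scope classical_set_scope.
Local Open Scope ring_scope.

Section Defs.
Context {R : realType} {V : normedModType R}.

Definition convex_set_of (C : set V) : Prop :=
  forall a b, C a -> C b -> forall t : R, 0 <= t <= 1 -> C (t *: a + (1 - t) *: b).

Definition nearly_convex (O : set V) : Prop :=
  exists C : set V, [/\ convex_set_of C, C `<=` O & O `<=` closure C].

Definition aff (O : set V) : set V :=
  [set x | exists (k : nat) (pts : 'I_k -> V) (lam : 'I_k -> R),
     [/\ forall i, O (pts i), \sum_(i < k) lam i = 1 & x = \sum_(i < k) lam i *: pts i]].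

Definition ri (O : set V) : set V :=
  [set a | O a /\ exists2 d : R, 0 < d & ball a d `&` aff O `<=` O].
End Defs.

Section Fun.
Context {R : realType} {n p : nat}.
Local Open Scope ereal_scope.

Definition dotv (m : nat) (u x : 'rV[R]_m) : R := (\sum_(i < m) u ord0 i * x ord0 i)%R.

Definition dom (f : 'rV[R]_n * 'rV[R]_p -> \bar R) : set ('rV[R]_n * 'rV[R]_p) :=
  [set z | f z < +oo].

Definition epi (f : 'rV[R]_n * 'rV[R]_p -> \bar R) : set (('rV[R]_n * 'rV[R]_p) * R) :=
  [set zt | f zt.1 <= zt.2%:E].

Definition nearly_convex_fun (f : 'rV[R]_n * 'rV[R]_p -> \bar R) : Prop :=
  nearly_convex (epi f).

Definition proper_fun (f : 'rV[R]_n * 'rV[R]_p -> \bar R) : Prop :=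
  dom f !=set0 /\ forall z, -oo < f z.

Definition fconj (f : 'rV[R]_n * 'rV[R]_p -> \bar R) (uv : 'rV[R]_n * 'rV[R]_p) : \bar R :=
  ereal_sup [set ((dotv uv.1 xy.1 + dotv uv.2 xy.2)%R)%:E - f xy | xy in [set: 'rV[R]_n * 'rV[R]_p]].

Definition primal_val (f : 'rV[R]_n * 'rV[R]_p -> \bar R) : \bar R :=
  ereal_inf [set f (x, 0%R) | x in [set: 'rV[R]_n]].

Definition dual_val (f : 'rV[R]_n * 'rV[R]_p -> \bar R) : \bar R :=
  ereal_sup [set - fconj f (0%R, y) | y in [set: 'rV[R]_p]].
End Fun.

From mathcomp Require Import all_boot all_order all_algebra.
From mathcomp Require Import all_classical all_reals all_analysis.
From mathcomp Require Import ring lra.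
Import Order.TTheory GRing.Theory Num.Theory.
Import numFieldNormedType.Exports.
Set Implicit Arguments. Unset Strict Implicit. Unset Printing Implicit Defensive.
Local Open Scope classical_set_scope.
Local Open Scope ring_scope.

(* Weak duality [V_d <= V] is immediate from the definition of [f^*].  For the
   converse let [C] be convex with [C ⊆ epi f ⊆ cl C] and let [m = V], finite
   because [0 \in P2(dom f)].  Projecting [C] along [x] gives a convex set
   [K = {(y, t) | (x, y, t) \in C for some x}] with [t >= m] above [y = 0].
   1. Relative core (finite dimension): a convex set [D] in a linear subspace
      [L], dense in a ball of [L] around [0], contains [0] and with each [y]
      some [- mu y], [mu > 0].  Induction on the number of coordinates that [L]
      uses, slicing by coordinate hyperplanes.
   2. Separation: if [0] is in the core of the projection of [K] on [R^p], then
      [t >= m + <u, y>] on [K] for some [u]; the linear form is extended one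
      coordinate at a time (the one-dimensional Hahn-Banach step).
   3. The minorant passes from [C] to [cl C ⊇ epi f], hence [- f^*(0, u) >= m].
   The ri hypothesis makes step 1 applicable with [L] the span of [P2(dom f)]
   and [D] the projection of [K], which is dense in [P2(dom f)]. *)

Section Coordinates.
Variables (R : realType) (p : nat).
Implicit Types (y z : 'rV[R]_p) (L S : set 'rV[R]_p).

Lemma coord_le z i : `|z ord0 i| <= `|z|.
Proof. by rewrite [`|z|]mx_normrE; exact: (le_bigmax _ _ (ord0, i)). Qed.

(* [vanish_from k z]: the coordinates of [z] of index at least [k] are zero.
   Both inductions of this file run over [k], from [0] (only [z = 0]) up to [p]
   (no constraint at all). *)
Definition vanish_from (k : nat) z := forall i : 'I_p, (k <= i)%N -> z ord0 i = 0.

Lemma vanish_from0 z : vanish_from 0 z -> z = 0.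
Proof. by move=> z0; apply/matrixP => i j; rewrite (ord1 i) mxE; exact: z0. Qed.

Lemma vanish_from_size z : vanish_from p z.
Proof. by move=> i; rewrite leqNgt ltn_ord. Qed.

Lemma vanish_fromS k (i0 : 'I_p) z : nat_of_ord i0 = k ->
  vanish_from k.+1 z -> z ord0 i0 = 0 -> vanish_from k z.
Proof.
move=> i0k zk zi0 i; rewrite leq_eqVlt => /orP [/eqP ki|]; last exact: zk.
by have -> : i = i0 by apply: val_inj; rewrite /= -ki i0k.
Qed.

Lemma vanish_from_comb k (s t : R) y z :
  vanish_from k y -> vanish_from k z -> vanish_from k (s *: y + t *: z).
Proof. by move=> yk zk i ki; rewrite !mxE yk // zk // !mulr0 addr0. Qed.

Definition coord_hyperplane (i0 : 'I_p) : set 'rV[R]_p := [set z | z ord0 i0 = 0].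

Definition subspace L :=
  [/\ L 0, (forall a b, L a -> L b -> L (a + b)) & (forall (c : R) a, L a -> L (c *: a))].

Lemma subspace_hyperplane L i0 : subspace L -> subspace (L `&` coord_hyperplane i0).
Proof.
case=> L0 LD LZ; split; first by split => //; rewrite /coord_hyperplane /= mxE.
- move=> a b [La a0] [Lb b0]; split; first exact: LD.
  by rewrite /coord_hyperplane /= mxE a0 b0 addr0.
- by move=> c a [La a0]; split; [exact: LZ | rewrite /coord_hyperplane /= mxE a0 mulr0].
Qed.

Lemma convex_hyperplane (D : set 'rV[R]_p) i0 :
  convex_set_of D -> convex_set_of (D `&` coord_hyperplane i0).
Proof.
move=> cD a b [Da a0] [Db b0] t t01; split; first exact: cD.
by rewrite /coord_hyperplane /= !mxE a0 b0 !mulr0 addr0.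
Qed.

Lemma convex_shift (D : set 'rV[R]_p) v :
  convex_set_of D -> convex_set_of [set z | D (z - v)].
Proof.
move=> cD a b Da Db t t01; rewrite /=.
have -> : t *: a + (1 - t) *: b - v = t *: (a - v) + (1 - t) *: (b - v).
  by apply/matrixP => i j; rewrite !mxE; ring.
exact: cD.
Qed.

Definition span S := [set z | exists k (pts : 'I_k -> 'rV[R]_p) (lam : 'I_k -> R),
  (forall i, S (pts i)) /\ z = \sum_(i < k) lam i *: pts i].

Lemma span_subspace S : subspace (span S).
Proof.
split.
- by exists 0%N, (fun _ => 0), (fun _ => 0); split; [case | rewrite big_ord0].
- move=> a b [k1 [p1 [l1 [S1 ->]]]] [k2 [p2 [l2 [S2 ->]]]].
  exists (k1 + k2)%N, (fun i => match fintype.split i with inl a => p1 a | inr b => p2 b end),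
    (fun i => match fintype.split i with inl a => l1 a | inr b => l2 b end); split.
    by move=> i; case: (fintype.split i).
  rewrite big_split_ord /=; congr (_ + _); apply: eq_bigr => i _.
    by rewrite (unsplitK (inl i)).
  by rewrite (unsplitK (inr i)).
- move=> c a [k [pt [l [Sp ->]]]]; exists k, pt, (fun i => c * l i); split => //.
  by rewrite scaler_sumr; apply: eq_bigr => i _; rewrite scalerA.
Qed.

Lemma sub_span S : S `<=` span S.
Proof.
move=> z Sz; exists 1%N, (fun _ => z), (fun _ => 1); split => //.
by rewrite big_ord1 scale1r.
Qed.

(* When [0 \in S], every linear combination of points of [S] is an affine one
   (put the missing weight on [0]). *)
Lemma span_sub_aff S : S 0 -> span S `<=` aff S.
Proof.
move=> S0 z [k [pt [l [Sp ->]]]].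
exists k.+1, (fun i => if unlift ord0 i is Some j then pt j else 0),
  (fun i => if unlift ord0 i is Some j then l j else 1 - \sum_(j < k) l j); split.
- by move=> i; case: (unlift ord0 i).
- rewrite big_ord_recl unlift_none.
  rewrite [X in _ + X](eq_bigr l); first by rewrite subrK.
  by move=> i _; rewrite (liftK ord0 i).
- rewrite big_ord_recl unlift_none scaler0 add0r.
  by apply: eq_bigr => i _; rewrite (liftK ord0 i).
Qed.

End Coordinates.

Section DotProduct.
Variables (R : realType) (m : nat).
Implicit Types (u v y a b : 'rV[R]_m).

Lemma dotv0l y : dotv 0 y = 0.
Proof. by rewrite /dotv big1 // => i _; rewrite mxE mul0r. Qed.

Lemma dotv0r u : dotv u 0 = 0.
Proof. by rewrite /dotv big1 // => i _; rewrite mxE mulr0. Qed.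

Lemma dotvDl u v y : dotv (u + v) y = dotv u y + dotv v y.
Proof. by rewrite /dotv -big_split; apply: eq_bigr => i _; rewrite mxE mulrDl. Qed.

Lemma dotvZl (c : R) u y : dotv (c *: u) y = c * dotv u y.
Proof. by rewrite /dotv mulr_sumr; apply: eq_bigr => i _; rewrite mxE mulrA. Qed.

Lemma dotv_comb u a b (s t : R) :
  dotv u (s *: a + t *: b) = s * dotv u a + t * dotv u b.
Proof.
by rewrite /dotv !mulr_sumr -big_split; apply: eq_bigr => i _; rewrite !mxE /=; ring.
Qed.

Lemma dotvBr u a b : dotv u (a - b) = dotv u a - dotv u b.
Proof. by rewrite /dotv -sumrB; apply: eq_bigr => i _; rewrite !mxE mulrBr. Qed.

Lemma dotv_delta (i0 : 'I_m) y : dotv (delta_mx ord0 i0) y = y ord0 i0.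
Proof.
rewrite /dotv (bigD1 i0) //= big1 ?addr0; first by rewrite mxE !eqxx mul1r.
by move=> i /negbTE ni; rewrite mxE ni andbF mul0r.
Qed.

Lemma dotv_bound u v : `|dotv u v| <= (\sum_i `|u ord0 i|) * `|v|.
Proof.
rewrite /dotv mulr_suml; apply: (le_trans (ler_norm_sum _ _ _)).
by apply: ler_sum => i _; rewrite normrM ler_wpM2l // coord_le.
Qed.

End DotProduct.

Section RelativeCore.
Variables (R : realType) (p : nat).
Implicit Types (y z w a b : 'rV[R]_p) (L D : set 'rV[R]_p).

Definition adherent D z := forall e, 0 < e -> exists a, D a /\ `|a - z| < e.

Definition dense_in_ball L D (d : R) := forall z, L z -> `|z| < d -> adherent D z.

Lemma small_scale (d N : R) : 0 < d -> 0 <= N -> exists2 eps : R, 0 < eps & eps * N < d / 2.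
Proof.
move=> d0 N0; exists (d / (2 * (N + 1))); first by rewrite divr_gt0 // mulr_gt0 // ltr_pwDr.
have -> : d / (2 * (N + 1)) * N = (d / 2) * (N / (N + 1)).
  by field; apply: lt0r_neq0; lra.
have : N / (N + 1) < 1 by rewrite ltr_pdivrMr; lra.
have : 0 < d / 2 by lra.
nra.
Qed.

(* Two points [a], [b] of a convex set lying [eta]-close to [z + eps w] and
   [z - eps w], where [z] lies on the hyperplane [x_i0 = 0] and [w_i0 = 1],
   straddle that hyperplane; the point of the segment [a b] on it is
   [O(eta)]-close to [z]. *)
Lemma hyperplane_crossing D (i0 : 'I_p) z w a b (eps eta : R) :
  convex_set_of D -> D a -> D b -> z ord0 i0 = 0 -> w ord0 i0 = 1 ->
  0 < eta -> eta <= eps / 2 ->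
  `|a - (z + eps *: w)| < eta -> `|b - (z - eps *: w)| < eta ->
  exists c, [/\ D c, c ord0 i0 = 0 & `|c - z| < eta * (1 + 2 * `|w|)].
Proof.
move=> cD Da Db zi0 wi0 eta0 eta_eps ha hb.
pose ai := a ord0 i0; pose bi := b ord0 i0.
have hai : `|ai - eps| < eta.
  apply: le_lt_trans ha; apply: le_trans (coord_le _ i0).
  by rewrite !mxE zi0 wi0 add0r mulr1.
have hbi : `|bi + eps| < eta.
  apply: le_lt_trans hb; apply: le_trans (coord_le _ i0).
  by rewrite !mxE zi0 wi0 sub0r mulr1 opprK.
move: hai hbi; rewrite !ltr_norml => /andP [hai1 hai2] /andP [hbi1 hbi2].
have abp : 0 < ai - bi by lra.
pose lam := - bi / (ai - bi).
have lam0 : 0 < lam by rewrite divr_gt0 //; lra.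
have lam1 : lam <= 1 by rewrite ler_pdivrMr //; lra.
exists (lam *: a + (1 - lam) *: b); split.
- by apply: cD => //; rewrite ltW.
- by rewrite !mxE -/ai -/bi /lam; field; lra.
have -> : lam *: a + (1 - lam) *: b - z = lam *: (a - (z + eps *: w)) +
    (1 - lam) *: (b - (z - eps *: w)) + ((2 * lam - 1) * eps) *: w.
  by apply/matrixP => i j; rewrite !mxE; ring.
have drift : `|(2 * lam - 1) * eps| <= 2 * eta.
  have -> : (2 * lam - 1) * eps = - (ai + bi) * (eps / (ai - bi)).
    by rewrite /lam; field; lra.
  have e1 : eps / (ai - bi) <= 1 by rewrite ler_pdivrMr //; lra.
  have e0 : 0 <= eps / (ai - bi) by rewrite divr_ge0 //; lra.
  rewrite normrM (ger0_norm e0) normrN.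
  have : `|ai + bi| < 2 * eta by rewrite ltr_norml; apply/andP; split; lra.
  have := normr_ge0 (ai + bi); nra.
have comb : `|lam *: (a - (z + eps *: w)) + (1 - lam) *: (b - (z - eps *: w))| < eta.
  apply: (le_lt_trans (ler_normD _ _)).
  rewrite normrZ (gtr0_norm lam0) normrZ (@ger0_norm _ (1 - lam)); last lra.
  nra.
apply: (le_lt_trans (ler_normD _ _)); rewrite normrZ.
have := normr_ge0 w; nra.
Qed.

Lemma hyperplane_slice_dense L D (d : R) (i0 : 'I_p) w :
  subspace L -> convex_set_of D -> L w -> w ord0 i0 = 1 -> dense_in_ball L D d ->
  dense_in_ball (L `&` coord_hyperplane i0) (D `&` coord_hyperplane i0) (d / 2).
Proof.
move=> [_ LD LZ] cD Lw wi0 Ddense z [Lz zi0] zd e e0.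
have d0 : 0 < d by have := normr_ge0 z; lra.
have N0 := normr_ge0 w.
have [eps eps0 epsN] := small_scale d0 N0.
pose eta := Num.min (eps / 2) (e / (1 + 2 * `|w|)).
have eta0 : 0 < eta by rewrite lt_min !divr_gt0 //; lra.
have eta_eps : eta <= eps / 2 by rewrite ge_min lexx.
have eta_e : eta * (1 + 2 * `|w|) <= e.
  by rewrite -ler_pdivlMr; [rewrite ge_min lexx orbT | lra].
have near_z (s : R) : `|s| = eps -> adherent D (z + s *: w).
  move=> s_eps; apply: Ddense; first by apply: LD => //; exact: LZ.
  by apply: (le_lt_trans (ler_normD _ _)); rewrite normrZ s_eps; lra.
have [a [Da ha]] := near_z eps (gtr0_norm eps0) eta eta0.
have hb : adherent D (z + (- eps) *: w) by apply: near_z; rewrite normrN gtr0_norm.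
have {hb}[b [Db hb]] := hb eta eta0.
rewrite scaleNr in hb.
have [c [Dc ci0 hc]] := hyperplane_crossing cD Da Db zi0 wi0 eta0 eta_eps ha hb.
by exists c; split; [split | exact: lt_le_trans eta_e].
Qed.

(* A convex subset of a subspace [L] of vectors vanishing from index [k], dense
   in a ball of [L] around [0], contains [0]: induction on [k], slicing [L] by
   the hyperplane [x_k = 0] when some vector of [L] has a nonzero [k]-th
   coordinate. *)
Lemma dense_convex_contains0_vanish k L D (d : R) :
  subspace L -> (forall z, L z -> vanish_from k z) -> convex_set_of D -> D `<=` L ->
  0 < d -> dense_in_ball L D d -> D 0.
Proof.
elim: k L D d => [|k IH] L D d sL Lk cD DL d0 Ddense.
  have [L0 _ _] := sL.
  have ad0 : adherent D 0 by apply: Ddense; rewrite ?normr0.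
  have [a [Da _]] := ad0 1 ltr01.
  by rewrite -(vanish_from0 (Lk a (DL a Da))).
have [Lk'|] := pselect (forall z, L z -> vanish_from k z); first exact: (IH L D d).
move=> /existsNP [v /not_implyP [Lv /existsNP [i0 /not_implyP [ki0 vi0]]]].
have i0k : nat_of_ord i0 = k.
  apply/eqP; rewrite eqn_leq ki0 andbT leqNgt; apply/negP => k_lt_i0.
  exact/vi0/(Lk v Lv).
pose w := (v ord0 i0)^-1 *: v.
have Lw : L w by case: sL => _ _ LZ; exact: LZ.
have wi0 : w ord0 i0 = 1 by rewrite /w mxE mulVf //; exact/eqP.
suff : (D `&` coord_hyperplane i0) 0 by case.
apply: (IH (L `&` coord_hyperplane i0) _ (d / 2)).
- exact: subspace_hyperplane.
- by move=> z [Lz zi0]; exact: vanish_fromS i0k (Lk z Lz) zi0.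
- exact: convex_hyperplane.
- exact: setSI.
- lra.
- exact: (hyperplane_slice_dense sL cD Lw wi0 Ddense).
Qed.

Lemma dense_convex_contains0 L D (d : R) :
  subspace L -> convex_set_of D -> D `<=` L -> 0 < d -> dense_in_ball L D d -> D 0.
Proof.
move=> sL; apply: (dense_convex_contains0_vanish (k := p)) => // z _.
exact: vanish_from_size.
Qed.

Lemma dense_in_ball_shift L D (d : R) v : subspace L -> L v -> `|v| < d / 2 ->
  dense_in_ball L D d -> dense_in_ball L [set z | D (z - v)] (d / 2).
Proof.
move=> [_ LD LZ] Lv vd Ddense z Lz zd e e0.
have Lzv : L (z - v) by apply: LD => //; rewrite -scaleN1r; exact: LZ.
have zvd : `|z - v| < d by apply: (le_lt_trans (ler_normB _ _)); lra.
have [a [Da ha]] := Ddense _ Lzv zvd e e0.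
exists (a + v); split; first by rewrite /= addrK.
by rewrite opprB addrA in ha.
Qed.

Lemma dense_convex_core L D (d : R) y :
  subspace L -> convex_set_of D -> D `<=` L -> 0 < d -> dense_in_ball L D d ->
  D y -> exists2 mu : R, 0 < mu & D ((- mu) *: y).
Proof.
move=> sL cD DL d0 Ddense Dy.
have [mu mu0 muy] := small_scale d0 (normr_ge0 y).
exists mu => //.
have [_ LD LZ] := sL.
have Lmy : L (mu *: y) by apply: LZ; exact: DL.
suff : [set z | D (z - mu *: y)] 0 by rewrite /= sub0r -scaleNr.
apply: (@dense_convex_contains0 L _ (d / 2)) => //.
- exact: convex_shift.
- by move=> z Dz; rewrite -(subrK (mu *: y) z); apply: LD => //; exact: DL.
- lra.
- by apply: dense_in_ball_shift => //; rewrite normrZ gtr0_norm.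
Qed.

End RelativeCore.

Section Separation.
Variables (R : realType) (p : nat) (K : 'rV[R]_p -> R -> Prop) (m : R).

Hypothesis K_convex : forall a ta b tb (l : R), K a ta -> K b tb -> 0 <= l <= 1 ->
  K (l *: a + (1 - l) *: b) (l * ta + (1 - l) * tb).
Hypothesis K_core : forall y t, K y t ->
  exists2 mu : R, 0 < mu & exists t', K ((- mu) *: y) t'.
Hypothesis K_bottom : forall t, K 0 t -> m <= t.

Definition minorant_upto (k : nat) (u : 'rV[R]_p) :=
  forall y t, K y t -> vanish_from k y -> m + dotv u y <= t.

Section ExtensionStep.
(* One-dimensional Hahn-Banach step: extend the minorant from the vectors
   vanishing from [k] to those vanishing from [k + 1], by choosing the slope [c]
   of the new coordinate [i0 = k]. *)
Variables (k : nat) (i0 : 'I_p) (u : 'rV[R]_p).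
Hypotheses (i0k : nat_of_ord i0 = k) (Hu : minorant_upto k u).

Let gap y t := t - m - dotv u y.
Let slope_neg := [set r | exists y t,
  [/\ K y t, vanish_from k.+1 y, y ord0 i0 < 0 & r = gap y t / y ord0 i0]].
Let slope_pos := [set r | exists y t,
  [/\ K y t, vanish_from k.+1 y, 0 < y ord0 i0 & r = gap y t / y ord0 i0]].

(* Every slope on the negative side is below every slope on the positive side:
   the segment joining the two points crosses the hyperplane, where the gap is
   nonnegative, and the gap is affine along it. *)
Lemma slopes_ordered r s : slope_neg r -> slope_pos s -> r <= s.
Proof.
move=> [a [ta [Ka ak1 an ->]]] [b [tb [Kb bk1 bp ->]]].
set ak := a ord0 i0 in an *; set bk := b ord0 i0 in bp *.
have bap : 0 < bk - ak by lra.
pose l := bk / (bk - ak).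
have l01 : 0 <= l <= 1.
  by rewrite divr_ge0 ?ler_pdivrMr //=; lra.
have cross : vanish_from k (l *: a + (1 - l) *: b).
  apply: vanish_fromS i0k (vanish_from_comb _ _ ak1 bk1) _.
  by rewrite !mxE -/ak -/bk /l; field; lra.
have gap_comb : 0 <= l * gap a ta + (1 - l) * gap b tb.
  by have := Hu (K_convex Ka Kb l01) cross; rewrite dotv_comb /gap; lra.
have cross_num : 0 <= bk * gap a ta - ak * gap b tb.
  have -> : bk * gap a ta - ak * gap b tb =
      (bk - ak) * (l * gap a ta + (1 - l) * gap b tb) by rewrite /l; field; lra.
  by rewrite mulr_ge0 //; lra.
rewrite -subr_le0.
have -> : gap a ta / ak - gap b tb / bk = (bk * gap a ta - ak * gap b tb) * (ak * bk)^-1.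
  by field; rewrite (lt0r_neq0 bp) (ltr0_neq0 an).
by apply: mulr_ge0_le0 => //; rewrite invr_le0 ltW // nmulr_rlt0.
Qed.

Lemma reflect_point y t : K y t -> vanish_from k.+1 y ->
  exists2 mu : R, 0 < mu & exists t', K ((- mu) *: y) t' /\ vanish_from k.+1 ((- mu) *: y).
Proof.
move=> Kyt yk; have [mu mu0 [t' Kt']] := K_core Kyt.
by exists mu => //; exists t'; split => // i ki; rewrite mxE yk // mulr0.
Qed.

(* Hence a slope exists on one side iff one exists on the other, and the
   supremum of the negative-side slopes separates the two families. *)
Lemma slope_separator :
  exists c, (forall r, slope_neg r -> r <= c) /\ (forall s, slope_pos s -> c <= s).
Proof.
have [A0|noneg] := pselect (slope_neg !=set0).
  have [r0 [a [ta [Ka ak an _]]]] := A0.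
  have [mu mu0 [t' [Kt' ak']]] := reflect_point Ka ak.
  set s0 := gap ((- mu) *: a) t' / ((- mu) *: a) ord0 i0.
  have Bs0 : slope_pos s0.
    exists ((- mu) *: a), t'; split => //.
    by rewrite mxE mulNr -mulrN mulr_gt0 // oppr_gt0.
  exists (sup slope_neg); split.
    by apply: ub_le_sup; exists s0 => r Ar; exact: slopes_ordered Ar Bs0.
  by move=> s Bs; apply: ge_sup => // r Ar; exact: slopes_ordered Ar Bs.
exists 0; split => [r Ar|s [b [tb [Kb bk bp _]]]]; first by exfalso; apply: noneg; exists r.
have [mu mu0 [t' [Kt' bk']]] := reflect_point Kb bk.
exfalso; apply: noneg.
exists (gap ((- mu) *: b) t' / ((- mu) *: b) ord0 i0), ((- mu) *: b), t'.
by split => //; rewrite mxE mulNr oppr_lt0 mulr_gt0.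
Qed.

Lemma minorant_step : exists u', minorant_upto k.+1 u'.
Proof.
have [c [cA cB]] := slope_separator.
exists (u + c *: delta_mx ord0 i0) => y t Kyt yk.
rewrite dotvDl dotvZl dotv_delta.
suff : c * y ord0 i0 <= gap y t by rewrite /gap; lra.
case: (ltrgtP (y ord0 i0) 0) => [yn|yp|y0].
- have := cA (gap y t / y ord0 i0) (ex_intro _ y (ex_intro _ t (And4 Kyt yk yn erefl))).
  by rewrite ler_ndivrMr // mulrC.
- have := cB (gap y t / y ord0 i0) (ex_intro _ y (ex_intro _ t (And4 Kyt yk yp erefl))).
  by rewrite ler_pdivlMr // mulrC.
- by rewrite y0 mulr0 /gap; have := Hu Kyt (vanish_fromS i0k yk y0); lra.
Qed.

End ExtensionStep.

(* Separation: [K] admits an affine minorant [m + <u, y>], obtained by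
   extending the trivial minorant on [{0}] one coordinate at a time. *)
Lemma affine_minorant : exists u, forall y t, K y t -> m + dotv u y <= t.
Proof.
suff minorant_upto_k k : (k <= p)%N -> exists u, minorant_upto k u.
  have [u Hu] := minorant_upto_k p (leqnn p).
  by exists u => y t Kyt; exact: Hu Kyt (vanish_from_size y).
elim: k => [_|k IH kp].
  exists 0 => y t Kyt y0; rewrite dotv0l addr0; apply: K_bottom.
  by rewrite -(vanish_from0 y0).
have [u Hu] := IH (ltnW kp).
exact: (@minorant_step k (Ordinal kp) u erefl Hu).
Qed.

End Separation.

Section Closure.
Variables (R : realType) (n p : nat) (C : set (('rV[R]_n * 'rV[R]_p) * R)).

Lemma closure_near q (e : R) : closure C q -> 0 < e ->
  exists w, C w /\ `|q.1.2 - w.1.2| < e /\ `|q.2 - w.2| < e.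
Proof.
move=> /(_ _ (nbhsx_ballx q e _)) clq e0; have [w [Cw qw]] := clq e0.
exists w; split => //.
move: qw; rewrite /ball /= /prod_ball /= => -[[_ qw_y] qw_t].
by move: qw_y qw_t; rewrite -!ball_normE.
Qed.

(* An affine minorant [t >= m + <u, y>] of [C] is also one of its closure,
   since [<u, .>] is Lipschitz. *)
Lemma closure_minorant (m : R) u : (forall q, C q -> m + dotv u q.1.2 <= q.2) ->
  forall q, closure C q -> m + dotv u q.1.2 <= q.2.
Proof.
move=> HC q clq; rewrite leNgt; apply/negP => gap.
pose Su := \sum_i `|u ord0 i|.
have Su0 : 0 <= Su by apply: sumr_ge0.
pose e := (m + dotv u q.1.2 - q.2) / (2 * (Su + 1)).
have e0 : 0 < e by rewrite divr_gt0 //; lra.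
have [w [Cw [near_y near_t]]] := closure_near clq e0.
have := HC w Cw.
have hd := dotv_bound u (q.1.2 - w.1.2); rewrite dotvBr in hd.
have he : Su * e + e = (m + dotv u q.1.2 - q.2) / 2 by rewrite /e; field; lra.
have hS : Su * `|q.1.2 - w.1.2| <= Su * e by rewrite ler_wpM2l // ltW.
move: near_t hd; rewrite ltr_norml ler_norml -/Su => /andP [ht ht'] /andP [hd hd'].
lra.
Qed.

End Closure.

Section Duality.
Variables (R : realType) (n p : nat).
Implicit Types (f : 'rV[R]_n * 'rV[R]_p -> \bar R).

(* Weak duality [V_d <= V], for every [f]: [f^*(0, y) >= - f(x, 0)]. *)
Lemma weak_duality f : (dual_val f <= primal_val f)%E.
Proof.
apply: ge_ereal_sup => _ [y _ <-].
apply: le_ereal_inf_tmp => _ [x _ <-].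
rewrite leeNl; apply: le_ereal_sup_tmp.
exists ((dotv 0 x + dotv y 0)%:E - f (x, 0%R))%E; first by exists (x, 0%R).
by rewrite dotv0l dotv0r addr0 sub0e.
Qed.

Lemma primal_val_lt_pinfty f : (snd @` dom f) 0 -> (primal_val f < +oo)%E.
Proof.
move=> [z dz z2]; apply: le_lt_trans dz; apply: ereal_inf_lbound.
by exists z.1 => //; rewrite -z2 -surjective_pairing.
Qed.

Lemma dual_val_ge f (m : R) u :
  (forall x y, ((m + dotv u y)%:E <= f (x, y))%E) -> (m%:E <= dual_val f)%E.
Proof.
move=> f_ge; apply: le_ereal_sup_tmp; exists (- fconj f (0%R, u))%E; first by exists u.
rewrite leeNr; apply: ge_ereal_sup => _ [[x y] _ <-].
rewrite /= dotv0l add0r.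
have := f_ge x y; case: (f (x, y)) => [r| |] //=.
- by rewrite lee_fin -EFinD lee_fin => ?; lra.
- by rewrite addeNy leNye.
Qed.

Section Projection.
Variables (f : 'rV[R]_n * 'rV[R]_p -> \bar R) (C : set (('rV[R]_n * 'rV[R]_p) * R)).
Hypotheses (C_convex : convex_set_of C) (C_epi : C `<=` epi f)
  (epi_closure : epi f `<=` closure C) (f_proper : forall z, (-oo < f z)%E).

Definition proj_C (y : 'rV[R]_p) (t : R) := exists x, C ((x, y), t).

Lemma proj_C_convex a ta b tb (l : R) : proj_C a ta -> proj_C b tb -> 0 <= l <= 1 ->
  proj_C (l *: a + (1 - l) *: b) (l * ta + (1 - l) * tb).
Proof.
move=> [xa Ca] [xb Cb] l01; exists (l *: xa + (1 - l) *: xb).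
exact: (C_convex Ca Cb l01).
Qed.

Definition proj_dom := [set y | exists t, proj_C y t].

Lemma proj_dom_convex : convex_set_of proj_dom.
Proof.
move=> a b [ta Ka] [tb Kb] l l01; exists (l * ta + (1 - l) * tb).
exact: proj_C_convex.
Qed.

Lemma proj_dom_sub : proj_dom `<=` snd @` dom f.
Proof.
move=> y [t [x Cx]]; exists (x, y) => //; apply: le_lt_trans (C_epi Cx) _.
exact: ltry.
Qed.

(* Every [(x, y) \in dom f] is in the closure of [C], so [proj_dom] is dense in
   [P2(dom f)]. *)
Lemma proj_dom_dense y : (snd @` dom f) y -> adherent proj_dom y.
Proof.
move=> [[x y'] dxy /= <-{y}] e e0.
case Ef: (f (x, y')) dxy => [r| |] dxy; last by have := f_proper (x, y'); rewrite Ef.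
  have : closure C ((x, y'), r) by apply: epi_closure; rewrite /epi /= Ef.
  move=> /(closure_near) /(_ e0) [w [Cw [near_y _]]].
  exists w.1.2; split; last by rewrite distrC.
  by exists w.2, w.1.1; rewrite -!surjective_pairing.
by move: dxy; rewrite /dom /= Ef.
Qed.

Lemma proj_C_core : ri (snd @` dom f) 0 -> forall y t, proj_C y t ->
  exists2 mu : R, 0 < mu & exists t', proj_C ((- mu) *: y) t'.
Proof.
move=> [S0 [d d0 ball_aff]] y t Kyt.
have dense : dense_in_ball (span (snd @` dom f)) proj_dom d.
  move=> z Lz zd; apply: proj_dom_dense; apply: ball_aff; split.
    by rewrite -ball_normE /= sub0r normrN.
  exact: span_sub_aff.
have DL : proj_dom `<=` span (snd @` dom f).
  by move=> z Dz; apply: sub_span; exact: proj_dom_sub.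
have [mu mu0 [t' Kt']] := dense_convex_core (span_subspace _) proj_dom_convex DL d0 dense
  (ex_intro _ t Kyt).
by exists mu => //; exists t'.
Qed.

Lemma proj_C_bottom (m : R) : primal_val f = m%:E -> forall t, proj_C 0 t -> m <= t.
Proof.
move=> Pm t [x Cx]; rewrite -lee_fin -Pm.
by apply: le_trans (C_epi Cx); apply: ereal_inf_lbound; exists x.
Qed.

End Projection.
End Duality.

Theorem corollary7p2 (R : realType) (n p : nat)
  (f : 'rV[R]_n * 'rV[R]_p -> \bar R) :
  proper_fun f -> nearly_convex_fun f ->
  ri (snd @` dom f) (0 : 'rV[R]_p) ->
  primal_val f = dual_val f.
Proof.
move=> [_ f_proper] [C [C_convex C_epi epi_closure]] ri0.
apply/eqP; rewrite eq_le weak_duality andbT.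
case Pm : (primal_val f) => [m| |]; last by rewrite leNye.
- have [u Hu] := affine_minorant (proj_C_convex C_convex)
    (proj_C_core C_convex C_epi epi_closure f_proper ri0) (proj_C_bottom C_epi Pm).
  have C_above : forall q, C q -> m + dotv u q.1.2 <= q.2.
    by move=> [[x y] t] Cq; apply: Hu; exists x.
  apply: (dual_val_ge (u := u)) => x y.
  case Ef: (f (x, y)) => [r| |]; [|by rewrite leey|by have := f_proper (x, y); rewrite Ef].
  rewrite lee_fin; apply: (closure_minorant C_above (q := (x, y, r))).
  by apply: epi_closure; rewrite /epi /= Ef.
- by have := primal_val_lt_pinfty (ri0.1); rewrite Pm.
Qed.
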